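(* Let $\mathscr D:\mathscr N=\mathscr N_1\cup\cdots\cup\mathscr N_k$ be a pairwise binary-sized decomposition of a chemical reaction network $\mathscr N$ with set of common complexes $\mathscr C_{\mathscr D}$. If $y'-x_1-\cdots-x_q-y''$ is a path in $\mathscr N$ such that $y',y''\in\mathscr C_{\mathscr D}$ while $x_1,\dots,x_q\notin\mathscr C_{\mathscr D}$, then there is a subnetwork $\mathscr N_i$ in which $y'$ and $y''$ are connected.
   Context: A CRN $\mathscr N=(\mathscr S,\mathscr C,\mathscr R)$ is viewed as a directed graph with vertex set the complexes $\mathscr C$ and arcs the reactions $\mathscr R$. A path is a path in the underlying undirected graph (consecutive complexes joined by a reaction in either direction); two complexes are connected in a network if a path in that network joins them. A decomposition $\mathscr N=\mathscr N_1\cup\cdots\cup\mathscr N_k$ is given by a partition $\{\mathscr R_1,\dots,\mathscr R_k\}$ of $\mathscr R$, $k\ge2$; the subnetwork $\mathscr N_i$ has reaction set $\mathscr R_i$ and complex set $\mathscr C_i$ consisting of the complexes occurring in reactions of $\mathscr R_i$. The set $\mathscr C_{\mathscr D}$ of common complexes consists of all complexes lying in the complex sets of at least two distinct subnetworks; $d=|\mathscr C_{\mathscr D}|$. The decomposition is pairwise binary-sized (PBS) if there are integers $0\le b\le c\le d$ such that $|\mathscr C_i\cap\mathscr C_j|\in\{b,c\}$ for all $i\neq j$. *)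

From mathcomp Require Import all_boot.
Set Implicit Arguments. Unset Strict Implicit. Unset Printing Implicit Defensive.

(* A CRN is modelled by its reaction graph: complexes form a finite type C,
   reactions are a finite set of ordered pairs (reactant, product).
   Species play no role in the statement. *)

Section CRN.
Variable C : finType.

Definition adj (S : {set C * C}) : rel C :=
  fun x y => ((x, y) \in S) || ((y, x) \in S).

Definition cplx (S : {set C * C}) : {set C} :=
  [set x | [exists r in S, (r.1 == x) || (r.2 == x)]].

Variables (R : {set C * C}) (k : nat) (part : C * C -> 'I_k).

Definition Rsub (i : 'I_k) : {set C * C} := [set r in R | part r == i].

Definition Csub (i : 'I_k) : {set C} := cplx (Rsub i).

Definition is_decomposition : Prop :=
  (2 <= k) /\ (forall i : 'I_k, Rsub i != set0).

Definition common : {set C} :=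
  [set x | [exists i : 'I_k, exists j : 'I_k,
      [&& i != j, x \in Csub i & x \in Csub j]]].

Definition PBS : Prop :=
  exists b c : nat, b <= c <= #|common| /\
    forall i j : 'I_k, i != j -> #|Csub i :&: Csub j| \in [:: b; c].

End CRN.

From mathcomp Require Import all_boot.

(* Every reaction lies in exactly one subnetwork, and a complex outside the
   common complexes occurs in at most one of them.  Hence all reactions
   incident to an interior vertex [x_j] of the path belong to the same
   subnetwork, so the whole path lies in a single subnetwork. *)

Set Implicit Arguments.
Unset Strict Implicit.
Unset Printing Implicit Defensive.

Section Subnetworks.
Variables (C : finType) (R : {set C * C}) (k : nat) (part : C * C -> 'I_k).

Local Notation Rsub := (Rsub R part).
Local Notation Csub := (Csub R part).
Local Notation common := (common R part).

Lemma Rsub_part r : r \in R -> r \in Rsub (part r).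
Proof. by move=> rR; rewrite inE rR eqxx. Qed.

Lemma Rsub_Csub i r : r \in Rsub i -> r.1 \in Csub i /\ r.2 \in Csub i.
Proof.
by move=> ri; split; rewrite inE; apply/existsP; exists r; rewrite ri eqxx ?orbT.
Qed.

Lemma adj_Rsub_Csub i a b : adj (Rsub i) a b -> a \in Csub i /\ b \in Csub i.
Proof.
by case/orP=> /Rsub_Csub [ha hb]; split.
Qed.

Lemma adj_Rsub_part a b : adj R a b -> exists i, adj (Rsub i) a b.
Proof.
case/orP=> /Rsub_part h; [exists (part (a, b)) | exists (part (b, a))];
  by rewrite /adj h ?orbT.
Qed.

Lemma Csub_notin_common x i j :
  x \notin common -> x \in Csub i -> x \in Csub j -> i = j.
Proof.
move=> xNc xi xj; apply/eqP; apply: contraNT xNc => ij.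
by rewrite inE; apply/existsP; exists i; apply/existsP; exists j; rewrite ij xi xj.
Qed.

Lemma path_notin_common_Rsub y z xs :
  path (adj R) y (rcons xs z) -> all (fun x => x \notin common) xs ->
  exists i, path (adj (Rsub i)) y (rcons xs z).
Proof.
elim: xs y => [|x xs IH] y /=.
  by rewrite andbT => /adj_Rsub_part [i yz] _; exists i; rewrite /= yz.
case/andP=> yx p /andP [xNc xsNc]; have [i pi] := IH x p xsNc.
have [j yxj] := adj_Rsub_part yx.
have xi : x \in Csub i.
  by case: xs {IH p xsNc} pi => [|w xs] /andP [/adj_Rsub_Csub []].
have ji : j = i by apply: Csub_notin_common xNc _ xi; case: (adj_Rsub_Csub yxj).
by exists i; rewrite /= -ji yxj ji.
Qed.

End Subnetworks.

Theorem lemma1 (C : finType) (R : {set C * C}) (k : nat)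
  (part : C * C -> 'I_k)
  (hdec : is_decomposition R part) (hpbs : PBS R part)
  (y1 y2 : C) (xs : seq C) :
  path (adj R) y1 (rcons xs y2) ->
  uniq (y1 :: rcons xs y2) ->
  y1 \in common R part -> y2 \in common R part ->
  all (fun x => x \notin common R part) xs ->
  exists i : 'I_k, connect (adj (Rsub R part i)) y1 y2.
Proof.
move=> p _ _ _ xsNc; have [i pi] := path_notin_common_Rsub p xsNc.
by exists i; apply/connectP; exists (rcons xs y2); rewrite ?last_rcons.
Qed.
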